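(* For every filter $\Xi\in P_{III*}$, the class $\mathcal{C}_{\Xi\text{-unc}}$ is nonempty if and only if $\wedge\Xi\not\subseteq\vee\overline{\Xi}$ (i.e. $\wedge\Xi\not\preceq\vee\overline{\Xi}$).
   Context: Let $n\ge1$ and $L=\{1,\dots,n\}$. For each $i\in L$ let $\mathcal H_i$ be a Hilbert space with $1<\dim\mathcal H_i<\infty$; for $X\subseteq L$ put $\mathcal H_X=\bigotimes_{i\in X}\mathcal H_i$ and let $\mathcal D_X$ be the set of density operators (positive semidefinite, trace one) on $\mathcal H_X$. $P_I$ denotes the set of partitions of $L$ (sets of nonempty pairwise disjoint subsets of $L$ whose union is $L$), partially ordered by refinement: $\upsilon\preceq\xi$ iff every part of $\upsilon$ is contained in some part of $\xi$. For $\xi\in P_I$, $\mathcal D_{\xi\text{-unc}}=\{\varrho\in\mathcal D_L:\ \varrho=\bigotimes_{X\in\xi}\varrho_X \text{ for some } \varrho_X\in\mathcal D_X\}$. For any set $S\subseteq P_I$ of partitions, $\mathcal D_{S\text{-unc}}=\bigcup_{\xi\in S}\mathcal D_{\xi\text{-unc}}$ (so $\mathcal D_{\emptyset\text{-unc}}=\emptyset$). $P_{II}$ is the set of nonempty down-sets (ideals) of $(P_I,\preceq)$, partially ordered by inclusion ($\boldsymbol\upsilon\preceq\boldsymbol\xi$ iff $\boldsymbol\upsilon\subseteq\boldsymbol\xi$); meets and joins in $P_{II}$ are intersections and unions. $P_{II*}\subseteq P_{II}$ is an arbitrary fixed nonempty subset with the induced order, and $P_{III*}$ is the set of nonempty up-sets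 of $P_{II*}$ (nonempty $\Xi\subseteq P_{II*}$ such that $\boldsymbol\xi\in\Xi$, $\boldsymbol\upsilon\in P_{II*}$, $\boldsymbol\xi\subseteq\boldsymbol\upsilon$ imply $\boldsymbol\upsilon\in\Xi$). For $\Xi\in P_{III*}$: $\overline{\Xi}=P_{II*}\setminus\Xi$, $\wedge\Xi=\bigcap_{\boldsymbol\xi\in\Xi}\boldsymbol\xi$, $\vee\overline\Xi=\bigcup_{\boldsymbol\xi'\in\overline\Xi}\boldsymbol\xi'$ (which is $\emptyset$ if $\overline\Xi=\emptyset$); these are sets of partitions, compared by inclusion. The class of strictly $\Xi$-uncorrelated states is $\mathcal C_{\Xi\text{-unc}}=\bigcap_{\boldsymbol\xi'\in\overline\Xi}(\mathcal D_L\setminus\mathcal D_{\boldsymbol\xi'\text{-unc}})\cap\bigcap_{\boldsymbol\xi\in\Xi}\mathcal D_{\boldsymbol\xi\text{-unc}}$. *)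

From HB Require Import structures.
From mathcomp Require Import all_boot all_order all_algebra.
Set Implicit Arguments. Unset Strict Implicit. Unset Printing Implicit Defensive.
Import Order.TTheory GRing.Theory Num.Theory.
Local Open Scope ring_scope.

(* Sites L = 'I_n; the local Hilbert space H_i is C^(e i + 2), so
   1 < dim H_i < oo.  A basis vector of H_L is a configuration
   c : forall i, 'I_(e i).+2.  A basis vector of H_X is represented as a
   configuration which is 0 outside X (canonical iso with (x)_{i in X} H_i). *)

Definition cfg (n : nat) (e : 'I_n -> nat) := {dffun forall i : 'I_n, 'I_(e i).+2}.

Definition supp_in (n : nat) (e : 'I_n -> nat) (X : {set 'I_n}) (c : cfg e) : bool :=
  [forall i, (i \notin X) ==> (c i == ord0)].

Definition idx (n : nat) (e : 'I_n -> nat) (X : {set 'I_n}) := {c : cfg e | supp_in X c}.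

Definition restr_fun (n : nat) (e : 'I_n -> nat) (X : {set 'I_n}) (c : cfg e) : cfg e :=
  finfun (fun i : 'I_n => (if i \in X then c i else ord0) : 'I_(e i).+2).

Lemma restr_supp (n : nat) (e : 'I_n -> nat) (X : {set 'I_n}) (c : cfg e) :
  supp_in X (restr_fun X c).
Proof.
apply/forallP => i; apply/implyP => Hi.
by rewrite /restr_fun ffunE (negbTE Hi).
Qed.

Definition restr (n : nat) (e : 'I_n -> nat) (X : {set 'I_n}) (c : cfg e) : idx e X :=
  exist _ (restr_fun X c) (restr_supp X c).

(* operators on H_X, as matrices in the product basis *)
Definition op (C : Type) (n : nat) (e : 'I_n -> nat) (X : {set 'I_n}) :=
  idx e X -> idx e X -> C.

Definition psd (C : numClosedFieldType) (n : nat) (e : 'I_n -> nat) (X : {set 'I_n})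
  (A : op C e X) : Prop :=
  forall v : idx e X -> C, 0 <= \sum_(a : idx e X) \sum_(b : idx e X) (v a)^* * A a b * v b.

Definition density (C : numClosedFieldType) (n : nat) (e : 'I_n -> nat) (X : {set 'I_n})
  (A : op C e X) : Prop :=
  psd A /\ \sum_(a : idx e X) A a a = 1.

Definition tensor (C : numClosedFieldType) (n : nat) (e : 'I_n -> nat)
  (xi : {set {set 'I_n}}) (f : forall X : {set 'I_n}, op C e X) : op C e [set: 'I_n] :=
  fun a b => \prod_(X in xi) f X (restr X (val a)) (restr X (val b)).

Definition is_partition (n : nat) (xi : {set {set 'I_n}}) : Prop :=
  partition xi [set: 'I_n].

Definition refines (n : nat) (u x : {set {set 'I_n}}) : Prop :=
  forall A, A \in u -> exists2 B, B \in x & A \subset B.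

Definition unc (C : numClosedFieldType) (n : nat) (e : 'I_n -> nat)
  (xi : {set {set 'I_n}}) (rho : op C e [set: 'I_n]) : Prop :=
  exists f : forall X : {set 'I_n}, op C e X,
    (forall X, X \in xi -> density (f X)) /\ rho = tensor xi f.

Definition uncS (C : numClosedFieldType) (n : nat) (e : 'I_n -> nat)
  (S : {set {set {set 'I_n}}}) (rho : op C e [set: 'I_n]) : Prop :=
  exists2 xi, xi \in S & unc xi rho.

Definition isPII (n : nat) (S : {set {set {set 'I_n}}}) : Prop :=
  S != set0 /\ (forall xi, xi \in S -> is_partition xi) /\
  (forall u x, x \in S -> is_partition u -> refines u x -> u \in S).

Definition isPIII (n : nat) (PIIs : {set {set {set {set 'I_n}}}})
  (Xi : {set {set {set {set 'I_n}}}}) : Prop :=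
  Xi \subset PIIs /\ Xi != set0 /\
  (forall x y, x \in Xi -> y \in PIIs -> x \subset y -> y \in Xi).

Definition meetS (n : nat) (Xi : {set {set {set {set 'I_n}}}}) : {set {set {set 'I_n}}} :=
  \bigcap_(x in Xi) x.

Definition joinSbar (n : nat) (PIIs Xi : {set {set {set {set 'I_n}}}}) :
  {set {set {set 'I_n}}} :=
  \bigcup_(x in PIIs :\: Xi) x.

Definition C_unc (C : numClosedFieldType) (n : nat) (e : 'I_n -> nat)
  (PIIs Xi : {set {set {set {set 'I_n}}}}) (rho : op C e [set: 'I_n]) : Prop :=
  density rho /\
  (forall x', x' \in PIIs :\: Xi -> ~ uncS x' rho) /\
  (forall x, x \in Xi -> uncS x rho).

(* If rho is both P- and Q-uncorrelated then, normalising by a diagonal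
   entry rho(a0, a0) != 0, each matrix entry factorises over the blocks of P
   and also over those of Q, hence over the nonempty intersections X :&: Y;
   renormalising the factors gives a product state over the meet of P and Q.
   So the partitions for which a state is uncorrelated are closed under meets,
   and a state in C_{Xi-unc} is uncorrelated for some partition in the meet of
   Xi, which must therefore avoid the join of the complement.
   Conversely, for a partition xi in the meet of Xi but outside that join, the
   tensor product of GHZ states over the blocks of xi is uncorrelated exactly
   for the partitions coarser than xi: a GHZ block cut by a product
   decomposition gives a vanishing entry that the product structure forces to
   be nonzero. *)

From HB Require Import structures.
From mathcomp Require Import all_boot all_order all_algebra.
From mathcomp Require Import ring.
From Stdlib Require Import FunctionalExtensionality.
Set Implicit Arguments. Unset Strict Implicit. Unset Printing Implicit Defensive.
Import Order.TTheory GRing.Theory Num.Theory.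
Local Open Scope ring_scope.

Section Configurations.

Variables (n : nat) (e : 'I_n -> nat).
Implicit Types (c d : cfg e) (W X Z : {set 'I_n}).

Definition cfg0 : cfg e := finfun (fun i => ord0 : 'I_(e i).+2).

Lemma cfg0E i : cfg0 i = ord0.
Proof. by rewrite ffunE. Qed.

Lemma supp_in_setT (c : cfg e) : supp_in [set: 'I_n] c.
Proof. by apply/forallP => i; rewrite in_setT. Qed.

Definition idxT (c : cfg e) : idx e [set: 'I_n] := exist _ c (supp_in_setT c).

Lemma idxT_val (a : idx e [set: 'I_n]) : idxT (val a) = a.
Proof. exact: val_inj. Qed.

Definition mix (W : {set 'I_n}) (c d : cfg e) : cfg e :=
  finfun (fun i => if i \in W then c i else d i).

Lemma mixE W c d i : mix W c d i = if i \in W then c i else d i.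
Proof. by rewrite ffunE. Qed.

Lemma mixT c d : mix [set: 'I_n] c d = c.
Proof. by apply/ffunP => i; rewrite mixE in_setT. Qed.

Lemma mix0 c d : mix set0 c d = d.
Proof. by apply/ffunP => i; rewrite mixE inE. Qed.

Lemma mixxx W c : mix W c c = c.
Proof. by apply/ffunP => i; rewrite mixE; case: ifP. Qed.

Lemma restr_funE X c i : restr_fun X c i = if i \in X then c i else ord0.
Proof. by rewrite ffunE. Qed.

Lemma mix_restr W c d : mix W (restr_fun W c) d = mix W c d.
Proof. by apply/ffunP => i; rewrite !mixE restr_funE; case: (i \in W). Qed.

Lemma supp_inP X c i : supp_in X c -> i \notin X -> c i = ord0.
Proof. by move/forallP/(_ i)/implyP => H /H/eqP. Qed.

Lemma mix_inj Z d : injective (fun p : idx e Z => idxT (mix Z (val p) d)).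
Proof.
move=> p q /(congr1 val) /= E; apply: val_inj; apply/ffunP => i.
case: (boolP (i \in Z)) => Hi.
  by have := congr1 (fun c : cfg e => c i) E; rewrite /= !mixE Hi.
by rewrite !(supp_inP (valP _) Hi).
Qed.

Lemma restr_eq X c d : {in X, forall i, c i = d i} -> restr X c = restr X d.
Proof.
move=> H; apply: val_inj; apply/ffunP => i; rewrite !restr_funE.
by case: ifP => // /H ->.
Qed.

Lemma restr_val X (p : idx e X) : restr X (val p) = p.
Proof.
apply: val_inj; apply/ffunP => i; rewrite restr_funE.
by case: ifPn => // Hi; rewrite (supp_inP (valP p) Hi).
Qed.

Lemma restr_mix X c d : restr X (mix X c d) = restr X c.
Proof. by apply: restr_eq => i Hi; rewrite mixE Hi. Qed.

Lemma sum_idx (R : nmodType) X (G : idx e X -> R) :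
  \sum_(p : idx e X) G p = \sum_(c : cfg e | supp_in X c) G (restr X c).
Proof.
rewrite (reindex (fun p : idx e X => val p)) /=.
  by apply: eq_big => p; [rewrite (valP p) | rewrite restr_val].
exists (fun c => restr X c) => c Hc; first by rewrite restr_val.
apply/ffunP => i; rewrite restr_funE.
by case: ifPn => // Hi; rewrite (supp_inP Hc Hi).
Qed.

End Configurations.

Section Partitions.

Variables (n : nat) (P : {set {set 'I_n}}).
Hypothesis hP : partition P [set: 'I_n].

Lemma partition_cover i : exists2 X, X \in P & i \in X.
Proof.
case/and3P: hP => /eqP hcov _ _.
have : i \in cover P by rewrite hcov in_setT.
by case/bigcupP => X HX Hi; exists X.
Qed.

Lemma partition_eq X Y i : X \in P -> Y \in P -> i \in X -> i \in Y -> X = Y.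
Proof.
case/and3P: hP => _ htriv _ HX HY HiX HiY.
by rewrite -(def_pblock htriv HX HiX) (def_pblock htriv HY HiY).
Qed.

Lemma partition_disj X Y i : X \in P -> Y \in P -> X != Y -> i \in X -> i \notin Y.
Proof.
move=> HX HY /eqP HXY HiX; apply/negP => HiY.
exact: HXY (partition_eq HX HY HiX HiY).
Qed.

Lemma partition_block_neq0 X : X \in P -> exists i, i \in X.
Proof.
case/and3P: hP => _ _ h0 HX.
case: (set_0Vmem X) => [E|[i Hi]]; last by exists i.
by move: h0; rewrite -E HX.
Qed.

(* Reindex along the bijection between configurations on L and families of
   configurations on the blocks of P. *)
Lemma sum_prod_restr (R : comPzSemiRingType) (e : 'I_n -> nat)
    (G : forall X : {set 'I_n}, idx e X -> R) :
  \sum_(a : idx e [set: 'I_n]) \prod_(X in P) G X (restr X (val a)) =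
  \prod_(X in P) \sum_(p : idx e X) G X p.
Proof.
case/and3P: hP => /eqP hcov htriv _.
rewrite (reindex (@idxT n e)) /=; last by exists val => a _ //; rewrite idxT_val.
under [RHS]eq_bigr do rewrite sum_idx.
rewrite (big_distr_big_dep (cfg0 e)) /=.
pose split_cfg (c : cfg e) : {ffun {set 'I_n} -> cfg e} :=
  [ffun X => if X \in P then restr_fun X c else cfg0 e].
pose glue (f : {ffun {set 'I_n} -> cfg e}) : cfg e := [ffun i => f (pblock P i) i].
rewrite (reindex split_cfg) /=; last first.
  exists glue => [c _|f].
    apply/ffunP => i; rewrite !ffunE.
    have Hi : i \in cover P by rewrite hcov in_setT.
    by rewrite (pblock_mem Hi) restr_funE mem_pblock Hi.
  rewrite inE => /pfamilyP [Hsup Hin].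
  apply/ffunP => X; rewrite ffunE; case: ifPn => HX.
    apply/ffunP => i; rewrite restr_funE ffunE.
    case: ifPn => Hi; first by rewrite (def_pblock htriv HX Hi).
    by rewrite (supp_inP (Hin X HX) Hi).
  apply/esym/eqP; apply: contraNT HX => HX.
  by apply: (subsetP Hsup); rewrite !inE.
apply: eq_big => [c|c _].
  apply/esym/pfamilyP; split.
    by apply/subsetP => X; rewrite inE ffunE; case: ifP => //; rewrite eqxx.
  by move=> X HX; rewrite ffunE HX; apply: restr_supp.
apply: eq_bigr => X HX; rewrite ffunE HX; congr (G X _).
by apply: restr_eq => i Hi; rewrite restr_funE Hi.
Qed.

End Partitions.

Lemma partition_single (n : nat) : (0 < n)%N -> partition [set [set: 'I_n]] [set: 'I_n].
Proof.
move=> hn; apply/and3P; split.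
- by rewrite /cover big_set1.
- by apply/trivIsetP => A B; rewrite !inE => /eqP -> /eqP ->; rewrite eqxx.
- by rewrite inE eq_sym; apply/set0Pn; exists (Ordinal hn); rewrite in_setT.
Qed.

Section Meet.

Variables (n : nat) (P Q : {set {set 'I_n}}).

Definition pmeet_pairs := [set u in setX P Q | u.1 :&: u.2 != set0].

Definition pmeet : {set {set 'I_n}} := [set u.1 :&: u.2 | u in pmeet_pairs].

Lemma refines_pmeetl : refines pmeet P.
Proof.
move=> _ /imsetP [[X Y] + ->]; rewrite !inE /= => /andP [/andP [HX _] _].
by exists X => //; apply: subsetIl.
Qed.

Lemma refines_pmeetr : refines pmeet Q.
Proof.
move=> _ /imsetP [[X Y] + ->]; rewrite !inE /= => /andP [/andP [_ HY] _].
by exists Y => //; apply: subsetIr.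
Qed.

Hypotheses (hP : partition P [set: 'I_n]) (hQ : partition Q [set: 'I_n]).

Lemma pmeet_eq X Y X' Y' i :
  X \in P -> Y \in Q -> X' \in P -> Y' \in Q ->
  i \in X :&: Y -> i \in X' :&: Y' -> (X, Y) = (X', Y').
Proof.
move=> HX HY HX' HY' /setIP [h1 h2] /setIP [h3 h4].
by rewrite (partition_eq hP HX HX' h1 h3) (partition_eq hQ HY HY' h2 h4).
Qed.

Lemma pmeet_inj : {in pmeet_pairs &, injective (fun u => u.1 :&: u.2)}.
Proof.
move=> [X Y] [X' Y']; rewrite !inE /= => /andP [/andP [HX HY] /set0Pn [i Hi]].
move=> /andP [/andP [HX' HY'] _] E.
by apply: (pmeet_eq HX HY HX' HY' Hi); rewrite -E.
Qed.

Lemma pmeet_partition : partition pmeet [set: 'I_n].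
Proof.
apply/and3P; split.
- apply/eqP/setP => i; rewrite in_setT; apply/bigcupP.
  have [X HX HiX] := partition_cover hP i; have [Y HY HiY] := partition_cover hQ i.
  have HiXY : i \in X :&: Y by rewrite inE HiX HiY.
  exists (X :&: Y) => //; apply/imsetP; exists (X, Y) => //.
  by rewrite !inE /= HX HY; apply/set0Pn; exists i.
- apply/trivIsetP => _ _ /imsetP [[X Y] + ->] /imsetP [[X' Y'] + ->] /=.
  rewrite !inE /= => /andP [/andP [HX HY] _] /andP [/andP [HX' HY'] _] Hne.
  apply/pred0P => i /=; apply/negbTE/andP => -[h h'].
  by case: (pmeet_eq HX HY HX' HY' h h') Hne => -> ->; rewrite eqxx.
- by apply/imsetP => -[[X Y]]; rewrite !inE /= => /andP [_ /eqP H] /esym.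
Qed.

End Meet.

Section PositiveOperators.

Variables (C : numClosedFieldType) (n : nat) (e : 'I_n -> nat).

Lemma psd_diag X (A : op C e X) a : psd A -> 0 <= A a a.
Proof.
move=> /(_ (fun x => (x == a)%:R)); set S := (X in 0 <= X -> _).
suff -> : S = A a a by [].
rewrite /S (bigD1 a) //= [X in _ + X]big1 => [|x Hx]; last first.
  by apply: big1 => y _; rewrite (negbTE Hx) conjC0 !mul0r.
rewrite addr0 (bigD1 a) //= [X in _ + X]big1 => [|y Hy]; last by rewrite (negbTE Hy) mulr0.
by rewrite addr0 eqxx conjC1 mul1r mulr1.
Qed.

Lemma psd_rank1 X (phi : idx e X -> C) (c : C) :
  0 <= c -> psd (fun p q : idx e X => c * (phi p * (phi q)^*)).
Proof.
move=> hc v; set w := \sum_a (v a)^* * phi a.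
have -> : \sum_a \sum_b (v a)^* * (c * (phi a * (phi b)^*)) * v b = c * (w * w^*).
  rewrite /w rmorph_sum /= mulr_suml mulr_sumr; apply: eq_bigr => a _.
  rewrite !mulr_sumr; apply: eq_bigr => b _; rewrite rmorphM /= conjCK; ring.
exact: mulr_ge0 hc (mul_conjC_ge0 _).
Qed.

Lemma psd_scale X (A : op C e X) (c : C) :
  0 <= c -> psd A -> psd (fun p q => c * A p q).
Proof.
move=> hc hA v.
have -> : \sum_a \sum_b (v a)^* * (c * A a b) * v b =
          c * \sum_a \sum_b (v a)^* * A a b * v b.
  rewrite mulr_sumr; apply: eq_bigr => a _.
  by rewrite mulr_sumr; apply: eq_bigr => b _; ring.
exact: mulr_ge0 hc (hA v).
Qed.

Lemma sum_inj_supp (I J : finType) (phi : J -> I) (F : I -> C) :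
  injective phi -> (forall a, a \notin [set phi p | p in [set: J]] -> F a = 0) ->
  \sum_a F a = \sum_p F (phi p).
Proof.
move=> inj H; rewrite (bigID (mem [set phi p | p in [set: J]])) /= [X in _ + X]big1 ?addr0.
  rewrite big_imset /=; last by move=> x y _ _ /inj.
  by apply: eq_bigl => p; rewrite in_setT.
by move=> a /H.
Qed.

Lemma psd_comp_inj X Z (A : op C e X) (phi : idx e Z -> idx e X) :
  injective phi -> psd A -> psd (fun p q => A (phi p) (phi q)).
Proof.
move=> inj hA v.
pose w a := if [pick p | phi p == a] is Some p then v p else 0.
have w0 a : a \notin [set phi p | p in [set: idx e Z]] -> w a = 0.
  rewrite /w; case: pickP => // p /eqP <-.
  by rewrite imset_f ?in_setT.
have wphi p : w (phi p) = v p.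
  by rewrite /w; case: pickP => [p' /eqP /inj -> //|/(_ p)]; rewrite eqxx.
have := hA w.
rewrite (sum_inj_supp inj); last first.
  by move=> a /w0 ->; apply: big1 => b _; rewrite conjC0 !mul0r.
congr (_ <= _); apply: eq_bigr => p _.
rewrite (sum_inj_supp inj); last by move=> b /w0 ->; rewrite mulr0.
by apply: eq_bigr => q _; rewrite !wphi.
Qed.

End PositiveOperators.

Section Entries.

Variables (C : numClosedFieldType) (n : nat) (e : 'I_n -> nat).
Implicit Types (rho : op C e [set: 'I_n]) (a b c d : cfg e) (W X Z : {set 'I_n}).

Definition entry rho a b : C := rho (idxT a) (idxT b).

Lemma entry_tensor P f c d :
  entry (tensor P f) c d = \prod_(X in P) f X (restr X c) (restr X d).
Proof. by []. Qed.

Definition ratio rho a0 a b W : C :=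
  entry rho (mix W a a0) (mix W b a0) / entry rho a0 a0.

Lemma ratio_tensor P f rho a0 a b W :
  partition P [set: 'I_n] -> rho = tensor P f -> entry rho a0 a0 != 0 ->
  ratio rho a0 a b W = \prod_(X in P) ratio rho a0 a b (W :&: X).
Proof.
move=> hP -> h0; pose D X := f X (restr X a0) (restr X a0).
have hD : entry (tensor P f) a0 a0 = \prod_(X in P) D X by [].
have hX X : X \in P -> ratio (tensor P f) a0 a b (W :&: X) =
    f X (restr X (mix W a a0)) (restr X (mix W b a0)) / D X.
  move=> HX; rewrite /ratio entry_tensor hD !(bigD1 X HX) /=.
  have mixI_in c : {in X, forall i, mix (W :&: X) c a0 i = mix W c a0 i}.
    by move=> i Hi; rewrite !mixE inE Hi andbT.
  have mixI_out X' c : X' \in P -> X' != X -> restr X' (mix (W :&: X) c a0) = restr X' a0.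
    move=> HX' Hne; apply: restr_eq => i Hi.
    by rewrite mixE inE (negbTE (partition_disj hP HX' HX Hne Hi)) andbF.
  rewrite !(restr_eq (mixI_in _)).
  under eq_bigr => X' /andP [HX' Hne] do rewrite !mixI_out //.
  have hR : \prod_(X' | (X' \in P) && (X' != X)) D X' != 0.
    by move: h0; rewrite hD (bigD1 X HX) /= mulf_eq0 negb_or => /andP [].
  by rewrite invfM mulrACA divff // mulr1.
by rewrite (eq_bigr _ hX) prodf_div -hD.
Qed.

(* Both factorisations of [ratio] refine to the meet; pairs of disjoint blocks
   contribute the factor [ratio _ _ _ _ set0 = 1]. *)
Lemma entry_pmeet rho P Q f g a0 a b :
  partition P [set: 'I_n] -> partition Q [set: 'I_n] ->
  rho = tensor P f -> rho = tensor Q g -> entry rho a0 a0 != 0 ->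
  entry rho a b / entry rho a0 a0 = \prod_(Z in pmeet P Q) ratio rho a0 a b Z.
Proof.
move=> hP hQ hf hg h0.
have -> : entry rho a b / entry rho a0 a0 = ratio rho a0 a b [set: 'I_n].
  by rewrite /ratio !mixT.
rewrite (ratio_tensor _ _ _ hP hf h0).
under eq_bigr do rewrite setTI (ratio_tensor _ _ _ hQ hg h0).
rewrite pair_big /= (bigID (fun u => u.1 :&: u.2 != set0)) /=.
rewrite [X in _ * X]big1 ?mulr1 => [|u /andP [_ /negbNE /eqP ->]]; last first.
  by rewrite /ratio !mix0 divff.
rewrite /pmeet big_imset /=; last exact: pmeet_inj.
by apply: eq_bigl => u; rewrite !inE.
Qed.

Lemma density_diag_neq0 rho : density rho -> exists a0, entry rho a0 a0 != 0.
Proof.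
case=> _ htr; case: (pickP (fun a : idx e [set: 'I_n] => rho a a != 0)) => [a Ha|H].
  by exists (val a); rewrite /entry idxT_val.
move: htr; rewrite big1 => [/eqP|a _]; first by rewrite eq_sym oner_eq0.
by apply/eqP/negbFE/H.
Qed.

Lemma density_normalize X (A : op C e X) :
  psd A -> \sum_p A p p != 0 -> density (fun p q => (\sum_r A r r)^-1 * A p q).
Proof.
move=> hA hne; split; last by rewrite -mulr_sumr mulVf.
apply: psd_scale (hA); rewrite invr_ge0.
by apply: sumr_ge0 => p _; apply: psd_diag.
Qed.

(* Not a partial trace: the sites outside [Z] are frozen at [a0], not summed over. *)
Definition block rho a0 Z : op C e Z :=
  fun p q => entry rho (mix Z (val p) a0) (mix Z (val q) a0).
Arguments block rho a0 Z : clear implicits.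

Lemma psd_block rho a0 Z : psd rho -> psd (block rho a0 Z).
Proof. exact: psd_comp_inj (@mix_inj _ _ Z a0). Qed.

Lemma trace_block_neq0 rho a0 Z :
  psd rho -> entry rho a0 a0 != 0 -> \sum_p block rho a0 Z p p != 0.
Proof.
move=> hpsd h0; apply: contra h0 => /eqP.
move/(psumr_eq0P (fun p _ => psd_diag p (psd_block a0 hpsd)))/(_ (restr Z a0) isT).
by rewrite /block mix_restr mixxx => ->.
Qed.

Lemma unc_pmeet rho P Q :
  partition P [set: 'I_n] -> partition Q [set: 'I_n] ->
  density rho -> unc P rho -> unc Q rho -> unc (pmeet P Q) rho.
Proof.
move=> hP hQ hd [f [_ hf]] [g [_ hg]].
have [a0 h0] := density_diag_neq0 hd; case: hd => hpsd htr.
pose t Z := \sum_p block rho a0 Z p p.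
pose h Z p q := (t Z)^-1 * block rho a0 Z p q.
have hdens Z : density (h Z).
  exact: density_normalize (psd_block a0 hpsd) (trace_block_neq0 Z hpsd h0).
pose K := entry rho a0 a0 * \prod_(Z in pmeet P Q) (t Z / entry rho a0 a0).
have hK (a b : idx e [set: 'I_n]) : rho a b = K * tensor (pmeet P Q) h a b.
  rewrite -[a]idxT_val -[b]idxT_val -/(entry rho (val a) (val b)).
  rewrite -(divfK h0 (entry rho _ _)) (entry_pmeet _ _ hP hQ hf hg h0).
  rewrite /K /tensor mulrC -!mulrA; congr (_ * _).
  rewrite -big_split /=; apply: eq_bigr => Z _.
  rewrite /ratio /h /block /= !mix_restr.
  by field; rewrite trace_block_neq0.
have K1 : K = 1.
  move: htr; under eq_bigr do rewrite hK.
  rewrite -mulr_sumr (sum_prod_restr (pmeet_partition hP hQ) (fun Z p => h Z p p)).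
  by rewrite big1 ?mulr1 // => Z _; case: (hdens Z).
exists h; split => [Z _|]; first exact: hdens.
do 2!apply: functional_extensionality => ?.
by rewrite hK K1 mul1r.
Qed.

Lemma unc_single_block rho : density rho -> unc [set [set: 'I_n]] rho.
Proof.
move=> hd; exists (fun X p q => rho (idxT (val p)) (idxT (val q))); split.
  move=> X; rewrite inE => /eqP ->.
  suff -> : (fun p q : idx e [set: 'I_n] => rho (idxT (val p)) (idxT (val q))) = rho by [].
  by do 2!apply: functional_extensionality => ?; rewrite !idxT_val.
do 2!apply: functional_extensionality => ?.
rewrite /tensor big_set1; congr (rho _ _); apply: val_inj; apply/ffunP => i;
  by rewrite /= restr_funE in_setT.
Qed.

End Entries.

Section GHZ.

Variables (C : numClosedFieldType) (n : nat) (e : 'I_n -> nat).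
Implicit Types (c d : cfg e) (X Y : {set 'I_n}).

Definition cfg1 : cfg e := finfun (fun i => @Ordinal (e i).+2 1 isT).

Lemma cfg1_neq0 i : (cfg1 i == ord0) = false.
Proof. by rewrite ffunE. Qed.

(* The support of the GHZ vector |0...0> + |1...1> of H_X. *)
Definition const01 X c : bool :=
  [forall i in X, c i == ord0] || [forall i in X, c i == cfg1 i].

Lemma eq_const01 X c d : {in X, forall i, c i = d i} -> const01 X c = const01 X d.
Proof. by move=> H; congr (_ || _); apply: eq_forallb_in => i /H ->. Qed.

Lemma const01_restr X c : const01 X (restr_fun X c) = const01 X c.
Proof. by apply: eq_const01 => i Hi; rewrite restr_funE Hi. Qed.

Lemma const01_0 X c : {in X, forall i, c i = ord0} -> const01 X c.
Proof. by move=> H; apply/orP; left; apply/forall_inP => i /H ->. Qed.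

Lemma const01_1 X c : {in X, forall i, c i = cfg1 i} -> const01 X c.
Proof. by move=> H; apply/orP; right; apply/forall_inP => i /H ->. Qed.

Lemma const01_mixed X c i j :
  i \in X -> j \in X -> c i = cfg1 i -> c j = ord0 -> const01 X c = false.
Proof.
move=> Hi Hj ci cj; apply/negbTE; rewrite negb_or; apply/andP; split.
  by apply/forall_inP => /(_ i Hi); rewrite ci cfg1_neq0.
by apply/forall_inP => /(_ j Hj); rewrite cj eq_sym cfg1_neq0.
Qed.

Definition ghz X : op C e X :=
  fun p q => 2^-1 * ((const01 X (val p))%:R * ((const01 X (val q))%:R)^*).

Lemma const01_idxP X (p : idx e X) :
  const01 X (val p) -> p = restr X (cfg0 e) \/ p = restr X cfg1.
Proof.
by case/orP => /forall_inP H; [left|right]; rewrite -[LHS]restr_val;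
  apply: restr_eq => i /H /eqP ->; rewrite ?cfg0E.
Qed.

Lemma trace_ghz X : (exists i, i \in X) -> \sum_(p : idx e X) ghz p p = 1.
Proof.
move=> [i0 Hi0]; pose p0 := restr X (cfg0 e); pose p1 := restr X cfg1.
have c0 : const01 X (val p0) by rewrite const01_restr; apply: const01_0 => i _; rewrite cfg0E.
have c1 : const01 X (val p1) by rewrite const01_restr; apply: const01_1.
have hne : p1 != p0.
  apply/eqP => /(congr1 (fun p : idx e X => val p i0)) /eqP.
  by rewrite /= !restr_funE Hi0 cfg0E cfg1_neq0.
rewrite (bigD1 p0) //= (bigD1 p1) //= big1 ?addr0 => [|p /andP [Hp0 Hp1]].
  by rewrite /ghz c0 c1 conjC_nat mulr1 -mulrDr -[1 + 1]/(2%:R) mulVf ?pnatr_eq0.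
rewrite /ghz; case: (boolP (const01 X (val p))) => [/const01_idxP|_]; last by rewrite mul0r mulr0.
by case=> Hp; [move: Hp0 | move: Hp1]; rewrite Hp eqxx.
Qed.

Lemma density_ghz X : (exists i, i \in X) -> density (@ghz X).
Proof.
by move=> HX; split; [apply: psd_rank1; rewrite invr_ge0 ler0n | apply: trace_ghz].
Qed.

Lemma density_tensor_ghz P : partition P [set: 'I_n] -> density (tensor P ghz).
Proof.
move=> hP; split.
  pose psi (a : idx e [set: 'I_n]) : C :=
    \prod_(X in P) (const01 X (val (restr X (val a))))%:R.
  have -> : tensor P ghz = fun a b => (\prod_(X in P) (2^-1 : C)) * (psi a * (psi b)^*).
    do 2!apply: functional_extensionality => ?.
    by rewrite /tensor /psi rmorph_prod -!big_split.
  by apply: psd_rank1; apply: prodr_ge0 => X _; rewrite invr_ge0 ler0n.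
rewrite (sum_prod_restr hP (fun X p => ghz p p)).
by apply: big1 => X HX; apply/trace_ghz/(partition_block_neq0 hP HX).
Qed.

Lemma entry_tensor_swap U Y (g : forall X, op C e X) c1 c2 b :
  partition U [set: 'I_n] -> Y \in U ->
  entry (tensor U g) c1 b * entry (tensor U g) c2 b =
  entry (tensor U g) (mix Y c1 c2) b * entry (tensor U g) (mix Y c2 c1) b.
Proof.
move=> hU HY; rewrite !entry_tensor !(bigD1 Y HY) /= !restr_mix.
have mix_out c d : \prod_(X | (X \in U) && (X != Y)) g X (restr X (mix Y c d)) (restr X b) =
                   \prod_(X | (X \in U) && (X != Y)) g X (restr X d) (restr X b).
  apply: eq_bigr => X /andP [HX Hne]; congr (g X _ _); apply: restr_eq => i Hi.
  by rewrite mixE (negbTE (partition_disj hU HX HY Hne Hi)).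
by rewrite !mix_out; ring.
Qed.

Lemma entry_tensor_ghz P c : partition P [set: 'I_n] ->
  entry (tensor P ghz) c (cfg0 e) =
  \prod_(X in P) (2^-1 * (const01 X c)%:R).
Proof.
move=> hP; rewrite entry_tensor; apply: eq_bigr => X _.
rewrite /ghz /= !const01_restr (@const01_0 X (cfg0 e)) => [|i _]; last exact: cfg0E.
by rewrite conjC_nat mulr1.
Qed.

Lemma entry_tensor_ghz_neq0 P c : partition P [set: 'I_n] ->
  {in P, forall X, const01 X c} -> entry (tensor P ghz) c (cfg0 e) != 0.
Proof.
move=> hP hc; rewrite entry_tensor_ghz //; apply/prodf_neq0 => X HX.
by rewrite hc // mulr1 invr_eq0 pnatr_eq0.
Qed.

(* If a block [X] of [P] met two blocks of [U], exchanging the "all ones on [X]"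
   configuration with the zero configuration on one of these blocks would make
   [X] mixed in one factor, while both original entries are nonzero. *)
Lemma refines_of_unc_tensor_ghz P U :
  partition P [set: 'I_n] -> partition U [set: 'I_n] ->
  unc U (tensor P ghz) -> refines P U.
Proof.
move=> hP hU [g [_ hg]] X HX.
have [i Hi] := partition_block_neq0 hP HX.
have [Y HY HiY] := partition_cover hU i.
exists Y => //; apply/subsetP => j Hj; apply/negPn/negP => HjY.
pose uX : cfg e := restr_fun X cfg1.
have const01_uX : {in P, forall X', const01 X' uX}.
  move=> X' HX'; case: (eqVneq X' X) => [->|Hne].
    by apply: const01_1 => k Hk; rewrite restr_funE Hk.
  by apply: const01_0 => k Hk; rewrite restr_funE (negbTE (partition_disj hP HX' HX Hne Hk)).
have mixed : const01 X (mix Y uX (cfg0 e)) = false.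
  apply: (const01_mixed (i := i) (j := j)) => //.
    by rewrite mixE HiY restr_funE Hi.
  by rewrite mixE (negbTE HjY) cfg0E.
have := entry_tensor_swap g uX (cfg0 e) (cfg0 e) hU HY.
rewrite -hg [X in _ = X * _]entry_tensor_ghz // (bigD1 X HX) /= mixed !mulr0 !mul0r.
apply/eqP; rewrite mulf_neq0 // entry_tensor_ghz_neq0 // => X' _.
by apply: const01_0 => k _; rewrite cfg0E.
Qed.

End GHZ.

Arguments ghz C {n} e [X].

Lemma refines_refl (n : nat) (P : {set {set 'I_n}}) : refines P P.
Proof. by move=> X HX; exists X. Qed.

Lemma refines_trans (n : nat) (P Q R : {set {set 'I_n}}) :
  refines P Q -> refines Q R -> refines P R.
Proof.
move=> hPQ hQR X /hPQ [Y /hQR [Z HZ HYZ] HXY].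
by exists Z => //; apply: subset_trans HYZ.
Qed.

(* By induction over the intersection, carrying a partition for which [rho] is
   uncorrelated and all of whose refinements lie in the partial intersection. *)
Lemma unc_bigcap (C : numClosedFieldType) (n : nat) (e : 'I_n -> nat)
    (F : {set {set {set {set 'I_n}}}}) (rho : op C e [set: 'I_n]) :
  (0 < n)%N -> {in F, forall x, isPII x} -> density rho ->
  {in F, forall x, uncS x rho} -> exists2 p, p \in \bigcap_(x in F) x & unc p rho.
Proof.
move=> hn hF hd hunc.
pose good (S : {set {set {set 'I_n}}}) := exists p, [/\ partition p [set: 'I_n], unc p rho &
  forall u, partition u [set: 'I_n] -> refines u p -> u \in S].
suff [p [hp hu hdown]] : good (\bigcap_(x in F) x).
  by exists p => //; apply: (hdown p hp); apply: refines_refl.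
apply: (big_rec good) => [|x S Hx [p [hp hu hdown]]].
  exists [set [set: 'I_n]]; split => [||u _ _]; last by rewrite inE.
    exact: partition_single.
  exact: unc_single_block.
have [q Hq huq] := hunc x Hx; have [_ [part_x down_x]] := hF x Hx.
exists (pmeet p q); split => [||u hu' href].
- exact: pmeet_partition hp (part_x q Hq).
- exact: unc_pmeet hp (part_x q Hq) hd hu huq.
rewrite inE (down_x u q) ?(hdown u) //.
  exact: refines_trans href (@refines_pmeetl _ p q).
exact: refines_trans href (@refines_pmeetr _ p q).
Qed.

Lemma uncS_tensor_ghz (C : numClosedFieldType) (n : nat) (e : 'I_n -> nat)
    (xi : {set {set 'I_n}}) (S : {set {set {set 'I_n}}}) :
  partition xi [set: 'I_n] -> isPII S -> uncS S (tensor xi (ghz C e)) <-> xi \in S.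
Proof.
move=> hxi [_ [part_S down_S]]; split => [[u Hu hu]|Hxi].
  exact: down_S Hu hxi (refines_of_unc_tensor_ghz hxi (part_S u Hu) hu).
exists xi => //; exists (ghz C e); split => // X HX.
exact/density_ghz/(partition_block_neq0 hxi HX).
Qed.

Theorem proposition1 (C : numClosedFieldType) (n : nat) (hn : (0 < n)%N)
  (e : 'I_n -> nat)
  (PIIs : {set {set {set {set 'I_n}}}})
  (hPne : PIIs != set0) (hPII : forall S, S \in PIIs -> isPII S)
  (Xi : {set {set {set {set 'I_n}}}}) (hXi : isPIII PIIs Xi) :
  (exists rho : op C e [set: 'I_n], C_unc PIIs Xi rho) <->
  ~~ (meetS Xi \subset joinSbar PIIs Xi).
Proof.
case: hXi => hsub [hXne _].
have PII_Xi : {in Xi, forall x, isPII x} by move=> x /(subsetP hsub)/hPII.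
split => [[rho [hd [hnot hyes]]]|/subsetPn [xi Hmeet Hjoin]].
  have [p Hp hu] := unc_bigcap hn PII_Xi hd hyes.
  apply/negP => /subsetP /(_ p Hp) /bigcupP [x' Hx' Hpx'].
  by apply: (hnot x' Hx'); exists p.
have [x0 Hx0] := set0Pn _ hXne.
have hxi : partition xi [set: 'I_n].
  by case: (PII_Xi x0 Hx0) => _ [+ _]; apply; move/bigcapP: Hmeet; apply.
exists (tensor xi (ghz C e)); split; first exact: density_tensor_ghz.
split => [x' Hx'|x Hx].
  have /hPII hx' : x' \in PIIs by move: Hx'; rewrite inE => /andP [].
  move/(uncS_tensor_ghz C e hxi hx') => Hxi; move/negP: Hjoin; apply.
  by apply/bigcupP; exists x'.
by apply/(uncS_tensor_ghz C e hxi (PII_Xi x Hx)); move/bigcapP: Hmeet; apply.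
Qed.
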